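(* Let $0<\sigma_1<\sigma_2$ and $\epsilon\in(0,1)$. If a mass vector $W$ satisfies $(1-\epsilon)H(\theta,\lambda)\le\tilde H(\theta,\lambda)\le(1+\epsilon)H(\theta,\lambda)$ for all $\theta\in\Theta$ and $\lambda\in[\kappa(\theta),\tau(\theta,\sigma_1)]$, then the same holds for all $\theta\in\Theta$ and $\lambda\in[\kappa(\theta),\tau(\theta,\sigma_2)]$.
   Context: Setting: $\Xi$ a metric space with metric $\mathtt d$, $p\ge1$, data $\xi_1,\dots,\xi_n\in\Xi$, loss $\ell:\mathbb R^d\times\Xi\to[0,\infty)$, feasible set $\Theta\subseteq\mathbb R^d$; there exist a positive continuous $\mathtt C(\theta)$ and $\xi_0\in\Xi$ with $\ell(\theta,\xi)\le\mathtt C(\theta)(1+\mathtt d^p(\xi,\xi_0))$. Define $h_k(\theta,\lambda)=\sup_{\zeta\in\Xi}\{\ell(\theta,\zeta)-\lambda\mathtt d^p(\zeta,\xi_k)\}$, $H=\frac1n\sum_kh_k$, and for a mass vector $W$ ($w_k\ge0,\sum w_k=1$) $\tilde H=\sum_kw_kh_k$; $\kappa(\theta)=\limsup_{\mathtt d(\xi,\xi_0)\to\infty}\frac{\ell(\theta,\xi)-\ell(\theta,\xi_0)}{\mathtt d^p(\xi,\xi_0)}$; $\rho=\max_k\mathtt d(\xi_k,\xi_0)$ and $\tau(\theta,\sigma)=\mathtt C(\theta)(2^{p-1}+\frac{1+2^{p-1}\rho^p}{\sigma^p})$ for $\sigma>0$. *)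

From HB Require Import structures.
From mathcomp Require Import all_boot all_order all_algebra.
From mathcomp Require Import all_classical all_reals all_analysis.
Set Implicit Arguments. Unset Strict Implicit. Unset Printing Implicit Defensive.
Import Order.TTheory GRing.Theory Num.Theory.
Import numFieldNormedType.Exports.
Local Open Scope classical_set_scope.
Local Open Scope ring_scope.

Section WDRO.
Variable R : realType.

Definition is_metric (Xi : Type) (dist : Xi -> Xi -> R) : Prop :=
  [/\ (forall x y, 0 <= dist x y),
      (forall x y, dist x y = 0 <-> x = y),
      (forall x y, dist x y = dist y x) &
      (forall x y z, dist x z <= dist x y + dist y z)].

Variables (Xi : Type) (dist : Xi -> Xi -> R) (p : R) (d : nat).
Variable loss : 'rV[R]_d -> Xi -> R.

Definition hfun (xik : Xi) (theta : 'rV[R]_d) (lam : R) : \bar R :=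
  ereal_sup [set (loss theta zeta - lam * (dist zeta xik `^ p))%:E | zeta in [set: Xi]].

Definition Hfun (n : nat) (xi : 'I_n -> Xi) (theta : 'rV[R]_d) (lam : R) : \bar R :=
  ((n%:R)^-1)%:E * (\sum_(k < n) hfun (xi k) theta lam)%E.

Definition Htilde (n : nat) (xi : 'I_n -> Xi) (w : 'I_n -> R)
  (theta : 'rV[R]_d) (lam : R) : \bar R :=
  (\sum_(k < n) (w k)%:E * hfun (xi k) theta lam)%E.

(* kappa(theta) = limsup_{dist(xi,xi0) -> oo} (loss(theta,xi) - loss(theta,xi0)) / dist^p(xi,xi0)
   = inf_M sup_{dist(xi,xi0) > M} ratio, in the extended reals. *)
Definition kappa (xi0 : Xi) (theta : 'rV[R]_d) : \bar R :=
  ereal_inf [set ereal_sup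
     [set ((loss theta x - loss theta xi0) / (dist x xi0 `^ p))%:E
        | x in [set x | M < dist x xi0]] | M in [set: R]].

Definition rho (n : nat) (xi : 'I_n -> Xi) (xi0 : Xi) : R :=
  \big[Num.max/0]_(k < n) dist (xi k) xi0.

Definition tau (C : 'rV[R]_d -> R) (n : nat) (xi : 'I_n -> Xi) (xi0 : Xi)
  (theta : 'rV[R]_d) (sigma : R) : R :=
  C theta * (2 `^ (p - 1) + (1 + 2 `^ (p - 1) * (rho xi xi0 `^ p)) / (sigma `^ p)).

End WDRO.

From HB Require Import structures.
From mathcomp Require Import all_boot all_order all_algebra.
From mathcomp Require Import all_classical all_reals all_analysis.
Import Order.TTheory GRing.Theory Num.Theory.
Import numFieldNormedType.Exports.
Local Open Scope classical_set_scope.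
Local Open Scope ring_scope.

(* Since [tau theta sigma] decreases in [sigma], the range of [lam] allowed
   for [sigma2] is contained in the one allowed for [sigma1]. *)

Lemma powR_inv_le_antitone (R : realType) (p s1 s2 : R) :
  0 <= p -> 0 < s1 -> s1 <= s2 -> (s2 `^ p)^-1 <= (s1 `^ p)^-1.
Proof.
move=> p_ge0 s1_gt0 s12; have s2_gt0 := lt_le_trans s1_gt0 s12.
rewrite lef_pV2 ?posrE ?powR_gt0 //.
by apply: ge0_ler_powR => //; rewrite nnegrE ltW.
Qed.

Lemma tau_antitone (R : realType) (Xi : Type) (dist : Xi -> Xi -> R)
  (p : R) (d n : nat) (xi : 'I_n -> Xi) (C : 'rV[R]_d -> R) (xi0 : Xi)
  (theta : 'rV[R]_d) (sigma1 sigma2 : R) :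
  0 <= p -> 0 <= C theta -> 0 < sigma1 -> sigma1 <= sigma2 ->
  tau dist p C xi xi0 theta sigma2 <= tau dist p C xi xi0 theta sigma1.
Proof.
move=> p_ge0 C_ge0 s1_gt0 s12.
rewrite /tau ler_wpM2l // lerD2l ler_wpM2l ?powR_inv_le_antitone //.
by rewrite addr_ge0 ?mulr_ge0 ?powR_ge0.
Qed.

Theorem corollary2 (R : realType) (Xi : Type) (dist : Xi -> Xi -> R)
  (p : R) (d n : nat) (xi : 'I_n -> Xi) (loss : 'rV[R]_d -> Xi -> R)
  (Theta : set 'rV[R]_d) (C : 'rV[R]_d -> R) (xi0 : Xi)
  (w : 'I_n -> R) (sigma1 sigma2 eps : R) :
  is_metric dist -> 1 <= p -> (0 < n)%N ->
  (forall theta x, 0 <= loss theta x) ->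
  (forall theta, 0 < C theta) -> continuous C ->
  (forall theta x, loss theta x <= C theta * (1 + dist x xi0 `^ p)) ->
  (forall k, 0 <= w k) -> \sum_(k < n) w k = 1 ->
  0 < sigma1 -> sigma1 < sigma2 -> 0 < eps < 1 ->
  (forall theta lam, theta \in Theta ->
     (kappa dist p loss xi0 theta <= lam%:E)%E ->
     lam <= tau dist p C xi xi0 theta sigma1 ->
     ((1 - eps)%:E * Hfun dist p loss xi theta lam
        <= Htilde dist p loss xi w theta lam
        <= (1 + eps)%:E * Hfun dist p loss xi theta lam)%E) ->
  forall theta lam, theta \in Theta ->
     (kappa dist p loss xi0 theta <= lam%:E)%E ->
     lam <= tau dist p C xi xi0 theta sigma2 ->
     ((1 - eps)%:E * Hfun dist p loss xi theta lam
        <= Htilde dist p loss xi w theta lam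
        <= (1 + eps)%:E * Hfun dist p loss xi theta lam)%E.
Proof.
move=> _ p_ge1 _ _ C_gt0 _ _ _ _ s1_gt0 s12 _ approx_sigma1 theta lam
  theta_in kappa_le lam_le.
apply: approx_sigma1 => //; apply: (le_trans lam_le).
apply: tau_antitone; [exact: le_trans ler01 p_ge1 | exact: ltW | by [] |
  exact: ltW].
Qed.
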